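(* Let $\varepsilon$ be a formal parameter with $\varepsilon^2=0$. For integers $\alpha_0,\beta_0,\gamma_0$, consider the initial triple $(1+\alpha_0\varepsilon,\,1+\beta_0\varepsilon,\,1+\gamma_0\varepsilon)$ of solutions of the Shadow Markoff equation $$A^2+B^2+C^2=(3-\sigma\varepsilon)ABC,\qquad \sigma=\alpha_0+\beta_0+\gamma_0,$$ and all solutions $(a+\alpha\varepsilon,b+\beta\varepsilon,c+\gamma\varepsilon)$ obtained from it by sequences of mutations and permutations along the Markoff tree. There exists a convex polygon $P$ in $\mathbb{QP}^2$ such that every solution obtained from the initial triple $(1+\alpha_0\varepsilon,1+\beta_0\varepsilon,1+\gamma_0\varepsilon)$ is positive (i.e., satisfies $a,b,c,\alpha,\beta,\gamma\in\mathbb{N}$) if and only if the point $(\alpha_0:\beta_0:\gamma_0)$ belongs to $P$.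
   Context: Dual numbers are elements $a+\alpha\varepsilon$ ($a,\alpha\in\mathbb{R}$) of the commutative algebra generated by $\varepsilon$ with $\varepsilon^2=0$. The mutation at $A$ sends $(A,B,C)$ to $(A',B,C)$ with $A'=(B^2+C^2)/A$; explicitly $a'=(b^2+c^2)/a$ and $\alpha'=(-a'\alpha+2b\beta+2c\gamma)/a$. Mutations at $B$ and $C$ are defined symmetrically. Mutations preserve the set of solutions of the Shadow Markoff equation; starting from real parts $(1,1,1)$, the real parts run over the classical Markoff tree of positive integer solutions of $a^2+b^2+c^2=3abc$. Because mutations act linearly on the nilpotent parts, an initial triple is naturally associated with the point $(\alpha_0:\beta_0:\gamma_0)\in\mathbb{QP}^2$. *)

(* Dual numbers a + alpha*eps are represented as pairs
   (a, alpha) of rationals; a triple of dual numbers as a triple of pairs. *)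
From mathcomp Require Import all_boot all_order all_algebra.
Set Implicit Arguments. Unset Strict Implicit. Unset Printing Implicit Defensive.
Import Order.TTheory GRing.Theory Num.Theory.
Local Open Scope ring_scope.

Definition dual := (rat * rat)%type.
Definition dtriple := (dual * dual * dual)%type.

Definition mut1 (A B C : dual) : dual :=
  let: (a, al) := A in let: (b, be) := B in let: (c, ga) := C in
  let a' := (b ^+ 2 + c ^+ 2) / a in
  (a', (- a' * al + 2 * b * be + 2 * c * ga) / a).

Definition mutA (t : dtriple) : dtriple :=
  let: (A, B, C) := t in (mut1 A B C, B, C).
Definition mutB (t : dtriple) : dtriple :=
  let: (A, B, C) := t in (A, mut1 B A C, C).
Definition mutC (t : dtriple) : dtriple :=
  let: (A, B, C) := t in (A, B, mut1 C A B).

(* transpositions generating all permutations of the triple *)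
Definition swap12 (t : dtriple) : dtriple := let: (A, B, C) := t in (B, A, C).
Definition swap23 (t : dtriple) : dtriple := let: (A, B, C) := t in (A, C, B).

Definition init_triple (a0 b0 c0 : int) : dtriple :=
  ((1, a0%:~R), (1, b0%:~R), (1, c0%:~R)).

Inductive obtained (t0 : dtriple) : dtriple -> Prop :=
  | obt_init : obtained t0 t0
  | obt_mutA t : obtained t0 t -> obtained t0 (mutA t)
  | obt_mutB t : obtained t0 t -> obtained t0 (mutB t)
  | obt_mutC t : obtained t0 t -> obtained t0 (mutC t)
  | obt_swap12 t : obtained t0 t -> obtained t0 (swap12 t)
  | obt_swap23 t : obtained t0 t -> obtained t0 (swap23 t).

Definition is_nat (q : rat) : Prop := exists n : nat, q = n%:R.

Definition positive_triple (t : dtriple) : Prop :=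
  let: ((a, al), (b, be), (c, ga)) := t in
  [/\ is_nat a, is_nat b & is_nat c] /\ [/\ is_nat al, is_nat be & is_nat ga].

Definition pt := (rat * rat * rat)%type.

Definition in_conv_hull (ps : seq pt) (x : pt) : Prop :=
  exists w : nat -> rat,
    [/\ forall i, (i < size ps)%N -> 0 <= w i,
        \sum_(i < size ps) w i = 1,
        x.1.1 = \sum_(i < size ps) w i * (nth x ps i).1.1,
        x.1.2 = \sum_(i < size ps) w i * (nth x ps i).1.2 &
        x.2   = \sum_(i < size ps) w i * (nth x ps i).2].

(* a (possibly degenerate) convex polygon in the affine chart
   {x + y + z = 1} of QP^2: convex hull of a nonempty finite list of
   points of that plane *)
Definition chart_polygon (ps : seq pt) : Prop :=
  ps != [::] /\ all (fun p : pt => p.1.1 + p.1.2 + p.2 == 1) ps.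

(* the projective point (a0 : b0 : c0), represented by its ray, meets P *)
Definition proj_point_in (ps : seq pt) (a0 b0 c0 : int) : Prop :=
  exists lam : rat, 0 < lam /\
    in_conv_hull ps (lam * a0%:~R, lam * b0%:~R, lam * c0%:~R).

(* Every triple obtained from ((1, a0), (1, b0), (1, c0)) solves the shadow Markoff
   equation with s = a0 + b0 + c0 and has positive real parts; on such solutions a
   mutation is the Vieta involution A' = 3BC - A, whose eps-part is again explicit.
   If a0 = b0 = c0 = k >= 0, every obtained triple therefore has the form
   (x + kx eps, y + ky eps, z + kz eps) with (x, y, z) an integral Markoff triple, so
   all of them are positive.  Conversely, mutating alternately the last two entries
   while A = 1 + a0 eps stays fixed gives real parts u_n with
   u_(n+2) = 3 u_(n+1) - u_n and eps-parts v_n with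
   v_(n+2) = 3 v_(n+1) - v_n + (3 a0 - s) u_(n+1).  If 3 a0 < s, the Wronskian
   v_(n+1) u_n - v_n u_(n+1) decreases by (s - 3 a0) u_(n+1)^2 at each step, so v_n / u_n
   eventually drops by a fixed amount per step and v_n becomes negative.  Positivity
   thus forces s <= 3 a0, 3 b0, 3 c0, i.e. a0 = b0 = c0 > 0, and P is the single point
   (1/3 : 1/3 : 1/3). *)

From mathcomp Require Import all_boot all_order all_algebra.
From mathcomp Require Import ring lra.
Set Implicit Arguments.
Unset Strict Implicit.
Unset Printing Implicit Defensive.
Import Order.TTheory GRing.Theory Num.Theory.
Local Open Scope ring_scope.

Lemma obtained_trans r s t : obtained r s -> obtained s t -> obtained r t.
Proof.
move=> hrs; elim=> // {}t _ ih.
- exact: obt_mutA. - exact: obt_mutB. - exact: obt_mutC.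
- exact: obt_swap12. - exact: obt_swap23.
Qed.

Lemma mutB_conj t : mutB t = swap12 (mutA (swap12 t)).
Proof. by case: t => [[A B] C]. Qed.

Lemma mutC_conj t : mutC t = swap23 (mutB (swap23 t)).
Proof. by case: t => [[A B] C]. Qed.

Lemma obtained_ind (P : dtriple -> Prop) t0 :
  (forall t, P t -> P (mutA t)) ->
  (forall t, P t -> P (swap12 t)) -> (forall t, P t -> P (swap23 t)) ->
  P t0 -> forall t, obtained t0 t -> P t.
Proof.
move=> PA P12 P23 Pt0 t; elim=> // {}t _ Pt.
- exact: PA.
- by rewrite mutB_conj; apply/P12/PA/P12.
- by rewrite mutC_conj mutB_conj; apply/P23/P12/PA/P12/P23.
- exact: P12.
- exact: P23.
Qed.

(* The last equation is the eps-coefficient of A^2 + B^2 + C^2 = (3 - s eps) A B C. *)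
Definition shadow_markoff (s : rat) (t : dtriple) : Prop :=
  let: ((a, al), (b, be), (c, ga)) := t in
  [/\ 0 < a, 0 < b, 0 < c, a ^+ 2 + b ^+ 2 + c ^+ 2 = 3 * a * b * c &
      2 * (a * al + b * be + c * ga)
        = 3 * (al * b * c + a * be * c + a * b * ga) - s * a * b * c].

Lemma shadow_markoff_swap12 s t : shadow_markoff s t -> shadow_markoff s (swap12 t).
Proof. by case: t => [[[a al] [b be]] [c ga]] [*]; split=> //; lra. Qed.

Lemma shadow_markoff_swap23 s t : shadow_markoff s t -> shadow_markoff s (swap23 t).
Proof. by case: t => [[[a al] [b be]] [c ga]] [*]; split=> //; lra. Qed.

Lemma mut1_vieta s a al b be c ga :
  shadow_markoff s ((a, al), (b, be), (c, ga)) ->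
  mut1 (a, al) (b, be) (c, ga)
    = (3 * b * c - a, 3 * (be * c + b * ga) - s * b * c - al).
Proof.
case=> a_gt0 _ _ hM hL; have a_neq0 : a != 0 by rewrite gt_eqF.
have a' : (b ^+ 2 + c ^+ 2) / a = 3 * b * c - a.
  by apply: (mulIf a_neq0); rewrite mulfVK //; lra.
rewrite /mut1 a'; congr pair.
by apply: (mulIf a_neq0); rewrite mulfVK //; lra.
Qed.

Lemma shadow_markoff_mutA s t : shadow_markoff s t -> shadow_markoff s (mutA t).
Proof.
case: t => [[[a al] [b be]] [c ga]] h; rewrite /mutA (mut1_vieta h).
case: h => a_gt0 b_gt0 c_gt0 hM hL; split=> //; try lra.
have : 0 < (3 * b * c - a) * a by rewrite mulrBl; nra.
by rewrite pmulr_lgt0.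
Qed.

Lemma obtained_shadow_markoff s t0 :
  shadow_markoff s t0 -> forall t, obtained t0 t -> shadow_markoff s t.
Proof.
apply: obtained_ind;
  [exact: shadow_markoff_mutA | exact: shadow_markoff_swap12 | exact: shadow_markoff_swap23].
Qed.

Definition ray_triple (k : rat) (t : dtriple) : Prop :=
  let: ((a, al), (b, be), (c, ga)) := t in
  [/\ a \is a Num.int, b \is a Num.int & c \is a Num.int] /\
  [/\ al = k * a, be = k * b & ga = k * c].

Lemma ray_triple_mutA k t :
  shadow_markoff (3 * k) t -> ray_triple k t -> ray_triple k (mutA t).
Proof.
case: t => [[[a al] [b be]] [c ga]] h; rewrite /mutA (mut1_vieta h).
case=> [[aZ bZ cZ] [-> -> ->]]; split; last by split=> //; ring.
by split=> //; rewrite rpredB // !rpredM // natr_int.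
Qed.

Lemma is_natP q : reflect (is_nat q) (q \is a Num.nat).
Proof. exact: natrP. Qed.

Lemma ray_triple_positive k t : k \is a Num.nat ->
  shadow_markoff (3 * k) t -> ray_triple k t -> positive_triple t.
Proof.
case: t => [[[a al] [b be]] [c ga]] kN [a_gt0 b_gt0 c_gt0 _ _].
case=> [[aZ bZ cZ] [-> -> ->]].
have [aN bN cN] : [/\ a \is a Num.nat, b \is a Num.nat & c \is a Num.nat].
  by rewrite !natrEint aZ bZ cZ !ltW.
by split; split; apply/is_natP; rewrite ?rpredM.
Qed.

Lemma ray_triple_swap12 k t : ray_triple k t -> ray_triple k (swap12 t).
Proof. by case: t => [[[a al] [b be]] [c ga]] [[? ? ?] [? ? ?]]; split; split. Qed.

Lemma ray_triple_swap23 k t : ray_triple k t -> ray_triple k (swap23 t).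
Proof. by case: t => [[[a al] [b be]] [c ga]] [[? ? ?] [? ? ?]]; split; split. Qed.

Lemma diagonal_positive (k : int) : 0 <= k ->
  forall t, obtained (init_triple k k k) t -> positive_triple t.
Proof.
move=> k_ge0; have kN : (k%:~R : rat) \is a Num.nat.
  by rewrite natrEint intr_int ler0z.
have inv : forall t, obtained (init_triple k k k) t ->
    shadow_markoff (3 * k%:~R) t /\ ray_triple k%:~R t.
  apply: obtained_ind => [t' [hS hR] | t' [hS hR] | t' [hS hR] |].
  - by split; [exact: shadow_markoff_mutA | exact: ray_triple_mutA].
  - by split; [exact: shadow_markoff_swap12 | exact: ray_triple_swap12].
  - by split; [exact: shadow_markoff_swap23 | exact: ray_triple_swap23].
  - split; first by split=> //=; lra.
    by split; split=> //=; rewrite mulr1.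
by move=> t /inv [hS hR]; apply: ray_triple_positive hS hR.
Qed.

Lemma exists_natr_gt (x : rat) : exists n : nat, x < n%:R.
Proof.
by exists (Num.bound `|x|); apply: le_lt_trans (ler_norm x) (archi_boundP (normr_ge0 x)).
Qed.

Section LinearizedMarkoffRecurrence.

Variables (d : rat) (u v : nat -> rat).
Hypotheses (u0 : u 0 = 1) (u1 : u 1 = 1).
Hypothesis u_rec : forall n, u n.+2 = 3 * u n.+1 - u n.
Hypothesis v_rec : forall n, v n.+2 = 3 * v n.+1 - v n + d * u n.+1.

Lemma markoff_chain_growth n :
  [/\ 1 <= u n, u n <= u n.+1, u n.+1 <= 3 * u n & n%:R <= u n.+1].
Proof.
elim: n => [|n [h1 h2 h3 h4]]; first by rewrite u0 u1; split; lra.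
by rewrite u_rec -natr1; split; lra.
Qed.

Let wronskian n := v n.+1 * u n - v n * u n.+1.

Lemma wronskian_le n : d <= 0 -> wronskian n <= wronskian 0 + d * (u n ^+ 2 - 1).
Proof.
move=> d_le0; elim: n => [|n ih]; first by rewrite u0; lra.
have [un_ge1 _ _ _] := markoff_chain_growth n.
have : d * (u n ^+ 2 - 1) <= 0 by rewrite mulr_le0_ge0 // subr_ge0; nra.
by rewrite /wronskian u_rec v_rec in ih *; nra.
Qed.

(* v/u changes by wronskian n / (u n * u n.+1) <= d / 3 + O(1 / (u n * u n.+1)), since
   u n.+1 <= 3 * u n; eventually the error term is below - d / 6. *)
Lemma ratio_eventually_drops : d < 0 ->
  exists N, forall n, (N <= n)%N -> v n.+1 / u n.+1 <= v n / u n + d / 6.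
Proof.
move=> d_lt0; have [N hN] := exists_natr_gt (6 * (wronskian 0 - d) / - d).
exists N => n le_Nn; have [un_ge1 un_le un1_le n_le] := markoff_chain_growth n.
have hW := wronskian_le n (ltW d_lt0).
have large : 6 * (wronskian 0 - d) < - d * (u n * u n.+1).
  rewrite ltr_pdivrMr ?oppr_gt0 // in hN.
  have N_le : N%:R <= u n * u n.+1.
    have : N%:R <= n%:R :> rat by rewrite ler_nat.
    nra.
  have : - d * N%:R <= - d * (u n * u n.+1) by rewrite ler_wpM2l // oppr_ge0 ltW.
  lra.
have -> : v n.+1 / u n.+1 = v n / u n + wronskian n / (u n * u n.+1).
  by rewrite /wronskian; field; apply/andP; split; apply/eqP; lra.
rewrite lerD2l ler_pdivrMr; last by nra.
have : d * u n * (3 * u n - u n.+1) <= 0.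
  have du_lt0 : d * u n < 0 by nra.
  by rewrite nmulr_rle0 // subr_ge0.
nra.
Qed.

Lemma linearized_chain_eventually_negative : d < 0 -> exists n, v n < 0.
Proof.
move=> d_lt0; have [N hN] := ratio_eventually_drops d_lt0.
have decay m : v (N + m)%N / u (N + m)%N <= v N / u N + m%:R * (d / 6).
  elim: m => [|m ih]; first by rewrite addn0 mul0r addr0.
  rewrite addnS -natr1; apply: le_trans (hN _ (leq_addr _ _)) _; lra.
have [m hm] := exists_natr_gt (6 * (v N / u N) / - d).
exists (N + m)%N.
have [u_ge1 _ _ _] := markoff_chain_growth (N + m).
rewrite ltr_pdivrMr ?oppr_gt0 // in hm.
have : v (N + m)%N / u (N + m)%N < 0 by apply: le_lt_trans (decay m) _; nra.
by rewrite ltr_pdivrMr ?mul0r //; lra.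
Qed.

End LinearizedMarkoffRecurrence.

Definition branch_step (t : dtriple) : dtriple := swap23 (mutC t).

Lemma branch_step_vieta s a al b be c ga :
  shadow_markoff s ((a, al), (b, be), (c, ga)) ->
  branch_step ((a, al), (b, be), (c, ga))
    = ((a, al), (3 * a * b - c, 3 * (al * b + a * be) - s * a * b - ga), (b, be)).
Proof.
move=> h; have /shadow_markoff_swap12 h' := shadow_markoff_swap23 h.
by rewrite /branch_step /mutC /swap23 (mut1_vieta h').
Qed.

Section MarkoffBranch.

Variables a b c : rat.
Let t0 : dtriple := ((1, a), (1, b), (1, c)).
Let branch n := iter n branch_step t0.

Lemma obtained_branch n : obtained t0 (branch n).
Proof.
elim: n => [|n ih]; first exact: obt_init.
by rewrite /branch iterS; apply/obt_swap23/obt_mutC.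
Qed.

Lemma shadow_markoff_branch n : shadow_markoff (a + b + c) (branch n).
Proof.
apply: obtained_shadow_markoff (obtained_branch n).
by split=> //; lra.
Qed.

Lemma branch_head n : (branch n).1.1 = (1, a).
Proof.
elim: n => // n; rewrite /branch iterS.
by case: (iter n branch_step t0) => [[A B] C].
Qed.

Lemma branch_rec n : (branch n.+2).2 =
  (3 * (branch n.+1).2.1 - (branch n).2.1,
   3 * (branch n.+1).2.2 - (branch n).2.2 + (3 * a - (a + b + c)) * (branch n.+1).2.1).
Proof.
have := shadow_markoff_branch n; have := branch_head n; rewrite /branch !iterS.
case: (iter n branch_step t0) => [[[x al] [y be]] [z ga]] ha h.
rewrite (branch_step_vieta h) /=; move: ha => /= [-> ->].
by congr pair; ring.
Qed.

Lemma all_positive_branch_bound :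
  (forall t, obtained t0 t -> positive_triple t) -> a + b + c <= 3 * a.
Proof.
move=> hpos; rewrite leNgt; apply/negP => hlt.
have [n] : exists n, (branch n).2.2 < 0.
  apply: (@linearized_chain_eventually_negative (3 * a - (a + b + c))
    (fun n => (branch n).2.1)) => //; try by move=> n; rewrite branch_rec.
  lra.
have := hpos _ (obtained_branch n).
case: (branch n) => [[[? ?] [? ?]] [? ga]] [_ [_ _ [m ->]]] /=.
by rewrite ltNge ler0n.
Qed.

End MarkoffBranch.

Lemma all_positive_obtained t0 t1 : obtained t0 t1 ->
  (forall t, obtained t0 t -> positive_triple t) ->
  forall t, obtained t1 t -> positive_triple t.
Proof. by move=> h01 hpos t /(obtained_trans h01); apply: hpos. Qed.

Lemma all_positive_diagonal (x y z : int) :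
  (forall t, obtained (init_triple x y z) t -> positive_triple t) ->
  [/\ 0 <= x, y = x & z = x].
Proof.
move=> hpos; have hx := all_positive_branch_bound hpos.
have hy := all_positive_branch_bound
  (all_positive_obtained (obt_swap12 (obt_init _)) hpos).
have hz := all_positive_branch_bound
  (all_positive_obtained (obt_swap12 (obt_swap23 (obt_init _))) hpos).
have [_ [/is_natP /natr_ge0 x_ge0 _ _]] := hpos _ (obt_init _).
split; first by rewrite -(ler0z rat).
- by apply: (@intr_inj rat); lra.
- by apply: (@intr_inj rat); lra.
Qed.

Definition centroid : pt := (1 / 3, 1 / 3, 1 / 3).

Lemma chart_polygon_centroid : chart_polygon [:: centroid].
Proof.
split; first by [].
by rewrite /all /centroid andbT; apply/eqP; rewrite [LHS]/=; lra.
Qed.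

Lemma proj_point_in_centroid (x y z : int) :
  proj_point_in [:: centroid] x y z <-> [/\ 0 < x, y = x & z = x].
Proof.
split.
- case=> lam [lam_gt0 [w [_]]]; rewrite !big_ord1 /= => -> ex ey ez.
  rewrite !mul1r in ex ey ez.
  have eq_x (n : int) : lam * n%:~R = 1 / 3 -> n%:~R = 1 / (3 * lam) :> rat.
    by move=> e; apply: (mulfI (lt0r_neq0 lam_gt0)); rewrite e; field; rewrite lt0r_neq0.
  split; last 2 first.
  + by apply: (@intr_inj rat); rewrite (eq_x _ ex) (eq_x _ ey).
  + by apply: (@intr_inj rat); rewrite (eq_x _ ex) (eq_x _ ez).
  by rewrite -(ltr0z rat) (eq_x _ ex) divr_gt0 // mulr_gt0.
- case=> x_gt0 -> ->; have x_gt0' : (0 : rat) < x%:~R by rewrite ltr0z.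
  exists (1 / (3 * x%:~R)); split; first by rewrite divr_gt0 // mulr_gt0.
  exists (fun=> 1); split=> [i _ | | | |]; rewrite ?big_ord1 //= mul1r;
    by field; rewrite lt0r_neq0.
Qed.

Theorem theorem3 :
  exists ps : seq pt, chart_polygon ps /\
    forall a0 b0 c0 : int, ~ (a0 = 0 /\ b0 = 0 /\ c0 = 0) ->
      ((forall t, obtained (init_triple a0 b0 c0) t -> positive_triple t)
       <-> proj_point_in ps a0 b0 c0).
Proof.
exists [:: centroid]; split; first exact: chart_polygon_centroid.
move=> x y z xyz_neq0; rewrite proj_point_in_centroid; split.
- move=> /all_positive_diagonal [x_ge0 ey ez]; split=> //.
  by rewrite lt_def x_ge0 andbT; apply/eqP => ex; apply: xyz_neq0; rewrite ey ez ex.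
- by case=> x_gt0 -> ->; apply: diagonal_positive; rewrite ltW.
Qed.
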